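(* Let $M=(E,\mathcal{I})$ be a matroid with $\sigma(M)=\lambda(M)=k$. Then any two distinct cocircuits of $M$ of size $k$ are disjoint. In particular, if $G$ is a connected graph (multiple edges allowed) with $\lambda(G)=\sigma(G)=k$, then any two distinct minimal edge cuts of $G$ having exactly $k$ edges have no edge in common.
   Context: For a matroid $M$, $\sigma(M)$ is the maximum number of pairwise disjoint bases and $\lambda(M)$ (the cogirth) is the minimum size of a cocircuit (a minimal set meeting every base). For a connected graph $G$, $\lambda(G)$ is the edge connectivity (the least number of edges whose removal disconnects $G$) and $\sigma(G)$ is the maximum number of pairwise edge-disjoint spanning trees of $G$; these are the cogirth and base packing number of the cycle matroid of $G$, whose cocircuits are the minimal edge cuts. *)

From mathcomp Require Import all_boot.
Set Implicit Arguments. Unset Strict Implicit. Unset Printing Implicit Defensive.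

Record matroid (E : finType) := Matroid {
  indep : {set E} -> bool;
  indep0 : indep set0;
  indep_sub : forall A B : {set E}, A \subset B -> indep B -> indep A;
  indep_aug : forall A B : {set E}, indep A -> indep B -> #|A| < #|B| ->
                exists2 x, x \in B :\: A & indep (x |: A)
}.

Section MatroidDefs.
Variables (E : finType) (M : matroid E).

Definition is_base (B : {set E}) : bool := maxset (indep M) B.

Definition meets_all_bases (C : {set E}) : bool :=
  [forall B : {set E}, is_base B ==> (C :&: B != set0)].

Definition is_cocircuit (C : {set E}) : bool := minset meets_all_bases C.

Definition has_disjoint_bases (n : nat) : Prop :=
  exists F : 'I_n -> {set E},
    (forall i, is_base (F i)) /\
    (forall i j, i != j -> [disjoint F i & F j]).

Definition sigma_eq (k : nat) : Prop :=
  has_disjoint_bases k /\ ~ has_disjoint_bases k.+1.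

Definition lambda_eq (k : nat) : Prop :=
  (exists C, is_cocircuit C /\ #|C| = k) /\
  (forall C, is_cocircuit C -> k <= #|C|).
End MatroidDefs.

Section GraphDefs.
Variables (V E : finType) (ends : E -> V * V).

Definition adj (F : {set E}) : rel V :=
  fun x y => [exists e in F, (ends e == (x, y)) || (ends e == (y, x))].

Definition connected_on (F : {set E}) : bool :=
  [forall x, forall y, connect (adj F) x y].

Definition graph_connected : bool := connected_on setT.

Definition is_spanning_tree (F : {set E}) : bool := minset connected_on F.

Definition is_edge_cut (C : {set E}) : bool := ~~ connected_on (~: C).

Definition is_min_edge_cut (C : {set E}) : bool := minset is_edge_cut C.

Definition has_disjoint_trees (n : nat) : Prop :=
  exists F : 'I_n -> {set E},
    (forall i, is_spanning_tree (F i)) /\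
    (forall i j, i != j -> [disjoint F i & F j]).

Definition graph_sigma_eq (k : nat) : Prop :=
  has_disjoint_trees k /\ ~ has_disjoint_trees k.+1.

Definition graph_lambda_eq (k : nat) : Prop :=
  (exists C, is_edge_cut C /\ #|C| = k) /\
  (forall C, is_edge_cut C -> k <= #|C|).
End GraphDefs.

From mathcomp Require Import all_boot.
Set Implicit Arguments. Unset Strict Implicit. Unset Printing Implicit Defensive.

(* Only the k pairwise disjoint bases F_0..F_(k-1)
   are used.  Every cocircuit C meets every base, so if |C| = k the pigeonhole
   principle makes each C :&: F_i a singleton and covers C by the F_i.  If C and
   D share a point x of F_i, then C :&: F_i = D :&: F_i = [set x]; but a base B
   and an element e of B determine at most one cocircuit meeting B exactly in e
   (the fundamental cocircuit), so C = D.

   It then checks both hypotheses for cocircuits and bases (via base exchange)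
   and, directly, for minimal edge cuts and spanning trees: a minimal cut is the
   boundary of a component of its complement, and when the cut meets a tree T
   only in e, that component is the component of an end of e in T - e. *)

Lemma singleton_meetP (T : finType) (X B : {set T}) e z :
  X :&: B = [set e] -> z \in X -> z \in B -> z = e.
Proof. by move=> XB zX zB; apply/set1P; rewrite -XB inE zX zB. Qed.

Lemma singleton_meet_mem (T : finType) (X B : {set T}) e :
  X :&: B = [set e] -> e \in X /\ e \in B.
Proof. by move=> XB; have := set11 e; rewrite -XB inE => /andP[]. Qed.

(* If X meets B only in e, then X can only meet y |: (B :\ e) in y; this is how
   an exchanged base detects membership of y in X. *)
Lemma meet_exchange (T : finType) (X B : {set T}) e y :
  X :&: B = [set e] -> X :&: (y |: (B :\ e)) != set0 -> y \in X.
Proof.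
move=> XB /set0Pn[z]; rewrite !inE => /andP[zX /orP[/eqP <- // | /andP[ze zB]]].
by rewrite (singleton_meetP XB zX zB) eqxx in ze.
Qed.

Section DisjointFamily.
Variables (T : finType) (k : nat) (F : 'I_k -> {set T}).
Hypothesis F_disj : forall i j, i != j -> [disjoint F i & F j].

Lemma disjoint_family_index i j x : x \in F i -> x \in F j -> i = j.
Proof.
move=> xi xj; case: (eqVneq i j) => // /F_disj /disjointFr/(_ xi).
by rewrite xj.
Qed.

Section Transversal.
Variable C : {set T}.
Hypotheses (C_meets : forall i, C :&: F i != set0) (C_card : #|C| = k).

(* Choosing a point of each C :&: F i gives an injection 'I_k -> C, which is a
   bijection since #|C| = k. *)
Lemma transversal_points :
  exists2 f : 'I_k -> T, forall i, f i \in C :&: F i & C = f @: setT.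
Proof.
have pickC i : {x | x \in C :&: F i} by apply/sigW/set0Pn.
pose f i := sval (pickC i); have fP i : f i \in C :&: F i := svalP (pickC i).
exists f => //.
have f_inj : injective f.
  move=> i j fij; apply: (disjoint_family_index (x := f i)).
    by case/setIP: (fP i).
  by rewrite fij; case/setIP: (fP j).
apply/esym/eqP; rewrite eqEcard card_imset // cardsT card_ord C_card leqnn andbT.
by apply/subsetP => _ /imsetP[i _ ->]; case/setIP: (fP i).
Qed.

Lemma transversal_cover x : x \in C -> exists i, x \in F i.
Proof.
have [f fP ->] := transversal_points; case/imsetP => i _ ->.
by exists i; case/setIP: (fP i).
Qed.

Lemma transversal_singleton i x : x \in C -> x \in F i -> C :&: F i = [set x].
Proof.
have [f fP defC] := transversal_points.
have onlyf y : y \in C :&: F i -> y = f i.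
  case/setIP => yC yi; move: yC; rewrite defC => /imsetP[j _ yj].
  have fj : f j \in F j by case/setIP: (fP j).
  have fji : f j \in F i by rewrite -yj.
  by rewrite yj (disjoint_family_index fj fji).
move=> xC xi; have -> : x = f i by apply: onlyf; rewrite inE xC xi.
by apply/setP => y; rewrite inE; apply/idP/eqP => [/onlyf | ->].
Qed.
End Transversal.

Variable P : pred {set T}.
Hypothesis P_meets : forall C, P C -> forall i, C :&: F i != set0.
Hypothesis P_fundamental : forall i e C D,
  P C -> P D -> C :&: F i = [set e] -> D :&: F i = [set e] -> C = D.

Theorem small_blockers_disjoint C D :
  P C -> P D -> #|C| = k -> #|D| = k -> C != D -> [disjoint C & D].
Proof.
move=> PC PD kC kD neCD; rewrite -setI_eq0; apply: contraR neCD.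
case/set0Pn => x /setIP[xC xD].
have [i xi] := transversal_cover (P_meets PC) kC xC.
apply/eqP/(P_fundamental (i := i) (e := x) PC PD).
  exact: transversal_singleton (P_meets PC) kC i x xC xi.
exact: transversal_singleton (P_meets PD) kD i x xD xi.
Qed.
End DisjointFamily.

Section MatroidFacts.
Variables (E : finType) (M : matroid E).
Implicit Types (B C D : {set E}).

Lemma base_card_le B B' : is_base M B -> is_base M B' -> #|B'| <= #|B|.
Proof.
move=> /maxsetP[iB maxB] /maxsetP[iB' _]; rewrite leqNgt; apply/negP => ltBB'.
have [x /setDP[_ xB] ixB] := indep_aug iB iB' ltBB'.
by move: xB; rewrite -(maxB _ ixB (subsetUr _ _)) setU11.
Qed.

Lemma base_card B B' : is_base M B -> is_base M B' -> #|B| = #|B'|.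
Proof. by move=> bB bB'; apply/eqP; rewrite eqn_leq !base_card_le. Qed.

Lemma indep_base_card I B : indep M I -> is_base M B -> #|I| = #|B| -> is_base M I.
Proof.
move=> iI bB cardI; have [B' bB' sIB'] := maxset_exists iI.
suff -> : I = B' by [].
by apply/eqP; rewrite eqEcard sIB' (base_card bB' bB) cardI /=.
Qed.

Lemma base_exchange B B' e : is_base M B -> is_base M B' -> e \in B ->
  exists2 y, y \in B' & is_base M (y |: (B :\ e)).
Proof.
move=> bB bB' eB.
have iBe : indep M (B :\ e) by apply: indep_sub (subsetDl _ _) (maxsetp bB).
have ltBe : #|B :\ e| < #|B'| by rewrite -(base_card bB bB') (cardsD1 e B) eB.
have [y /setDP[yB' yBe] iy] := indep_aug iBe (maxsetp bB') ltBe.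
exists y => //; apply: indep_base_card iy bB _.
by rewrite cardsU1 yBe (cardsD1 e B) eB.
Qed.

Lemma cocircuit_meets_base C B : is_cocircuit M C -> is_base M B ->
  C :&: B != set0.
Proof. by move=> /minsetp /forallP /(_ B) /implyP. Qed.

(* By minimality, C :\ x misses some base, which therefore meets C exactly in x. *)
Lemma cocircuit_isolating_base C x : is_cocircuit M C -> x \in C ->
  exists2 B, is_base M B & C :&: B = [set x].
Proof.
move=> cC xC.
have : ~~ meets_all_bases M (C :\ x).
  by apply: contraL xC => mCx; rewrite -(minsetinf cC mCx (subsetDl _ _)) setD11.
rewrite negb_forall => /existsP[B]; rewrite negb_imply negbK => /andP[bB /eqP CxB].
exists B => //; apply/eqP.
have : C :&: B \subset [set x].
  apply/subsetP => y /setIP[yC yB]; apply: contraT; rewrite inE => yx.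
  have : y \in (C :\ x) :&: B by rewrite !inE yx yC yB.
  by rewrite CxB inE.
by rewrite subset1 (negbTE (cocircuit_meets_base cC bB)) orbF.
Qed.

(* Two cocircuits meeting a base B exactly in e are nested: for x in C other
   than e, take a base B' isolating x in C and exchange e for some y of B'; the
   new base meets C only in y, forcing y = x, and meets D only in y as well. *)
Lemma fundamental_cocircuit_sub B C D e : is_base M B ->
  is_cocircuit M C -> is_cocircuit M D ->
  C :&: B = [set e] -> D :&: B = [set e] -> C \subset D.
Proof.
move=> bB cC cD CB DB; apply/subsetP => x xC.
have [eD eB] := singleton_meet_mem DB.
case: (eqVneq x e) => [-> // | xe].
have [B' bB' CB'] := cocircuit_isolating_base cC xC.
have [y yB' bBy] := base_exchange bB bB' eB.
have yC : y \in C := meet_exchange CB (cocircuit_meets_base cC bBy).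
have <- : y = x by apply/set1P; rewrite -CB' inE yC yB'.
exact: meet_exchange DB (cocircuit_meets_base cD bBy).
Qed.

Lemma fundamental_cocircuit_unique B C D e : is_base M B ->
  is_cocircuit M C -> is_cocircuit M D ->
  C :&: B = [set e] -> D :&: B = [set e] -> C = D.
Proof.
move=> bB cC cD CB DB.
exact: minsetinf cD (minsetp cC) (fundamental_cocircuit_sub bB cC cD CB DB).
Qed.
End MatroidFacts.

Section GraphFacts.
Variables (V E : finType) (ends : E -> V * V).
Implicit Types (F T C D : {set E}) (S : {set V}).

Lemma adj_sym F : symmetric (adj ends F).
Proof.
by move=> x y; apply/existsP/existsP => -[f /andP[fF H]]; exists f; rewrite fF orbC.
Qed.

Lemma adj_connect_sym F : connect_sym (adj ends F).
Proof. exact/sym_connect_sym/adj_sym. Qed.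

Lemma adj_edge F f : f \in F -> adj ends F (ends f).1 (ends f).2.
Proof. by move=> fF; apply/existsP; exists f; rewrite fF -surjective_pairing eqxx. Qed.

Lemma connect_adj_sub F F' x y : F \subset F' ->
  connect (adj ends F) x y -> connect (adj ends F') x y.
Proof.
move=> sFF'; apply: connect_sub => a b /existsP[f /andP[fF H]].
by apply/connect1/existsP; exists f; rewrite (subsetP sFF' _ fF).
Qed.

Definition reach F u : {set V} := [set v | connect (adj ends F) u v].

Definition boundary S : {set E} :=
  [set f | ((ends f).1 \in S) != ((ends f).2 \in S)].

Lemma boundary_reach_sub F u : boundary (reach F u) \subset ~: F.
Proof.
apply/subsetP => f; rewrite !inE; apply: contraNN => fF.
by apply/eqP; exact: connect_closed (adj_connect_sym F) u _ _ (adj_edge fF).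
Qed.

Lemma boundary_cut S u v : u \in S -> v \notin S -> is_edge_cut ends (boundary S).
Proof.
move=> uS vS; apply: contra vS => /forallP/(_ u)/forallP/(_ v) cuv.
have S_closed : closed (adj ends (~: boundary S)) S.
  move=> a b /existsP[f /andP[]]; rewrite !inE negbK => /eqP Hf.
  by case/orP => /eqP Ef; rewrite Ef /= in Hf.
by rewrite -(closed_connect S_closed cuv).
Qed.

Lemma connect_reach_sym F u a b :
  a \in reach F u -> b \in reach F u -> connect (adj ends F) a b.
Proof.
rewrite !inE => ua ub; apply: connect_trans ub.
by rewrite adj_connect_sym.
Qed.

Lemma cut_reach_proper C u : is_edge_cut ends C -> exists v, v \notin reach (~: C) u.
Proof.
rewrite /is_edge_cut negb_forall => /existsP[a]; rewrite negb_forall => /existsP[b].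
have [ua | ] := boolP (a \in reach (~: C) u); last by exists a.
have [ub | ] := boolP (b \in reach (~: C) u); last by exists b.
by rewrite (connect_reach_sym ua ub).
Qed.

(* A minimal edge cut is the boundary of the component of any vertex u in its
   complement: that boundary is a cut contained in C. *)
Lemma min_cut_boundary C u : is_min_edge_cut ends C -> C = boundary (reach (~: C) u).
Proof.
move=> mC; have [v vS] := cut_reach_proper u (minsetp mC).
have uS : u \in reach (~: C) u by rewrite inE connect0.
apply/esym/(minsetinf mC (boundary_cut uS vS)).
by have := boundary_reach_sub (~: C) u; rewrite setCK.
Qed.

Lemma connected_minus_edge T e v : connected_on ends T ->
  connect (adj ends (T :\ e)) (ends e).1 v || connect (adj ends (T :\ e)) (ends e).2 v.
Proof.
move=> /forallP/(_ (ends e).1)/forallP/(_ v) conn_v.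
pose A := [set w | connect (adj ends (T :\ e)) (ends e).1 w
                 || connect (adj ends (T :\ e)) (ends e).2 w].
have A_closed : closed (adj ends T) A.
  apply: (intro_closed (adj_connect_sym T)) => x y /existsP[f /andP[fT Hf]].
  have [fe | fe] := eqVneq f e.
    by move: Hf; rewrite fe /A !inE => /orP[] /eqP -> /= _; rewrite connect0 ?orbT.
  have xy : adj ends (T :\ e) x y by apply/existsP; exists f; rewrite !inE fe fT.
  by rewrite !inE => /orP[] /connect_trans/(_ (connect1 xy)) ->; rewrite ?orbT.
have : (ends e).1 \in A by rewrite inE connect0.
by rewrite (closed_connect A_closed conn_v) inE.
Qed.

(* If the cut C avoids T :\ e, the ends of e lie in different components of the
   complement of C; otherwise that complement would be connected. *)
Lemma cut_separates_tree_edge C T e : is_edge_cut ends C -> connected_on ends T ->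
  T :\ e \subset ~: C -> ~~ connect (adj ends (~: C)) (ends e).1 (ends e).2.
Proof.
move=> cutC connT sT; apply: contra cutC => c12.
have from1 z : connect (adj ends (~: C)) (ends e).1 z.
  case/orP: (connected_minus_edge e z connT) => /(connect_adj_sub sT) //.
  exact: connect_trans c12.
apply/forallP => a; apply/forallP => b.
by apply: (@connect_reach_sym _ (ends e).1); rewrite inE from1.
Qed.

Lemma reach_tree_minus_edge C T e : is_edge_cut ends C -> connected_on ends T ->
  T :\ e \subset ~: C -> reach (~: C) (ends e).1 = reach (T :\ e) (ends e).1.
Proof.
move=> cutC connT sT; apply/setP => v; rewrite !inE.
apply/idP/idP => [c1v | ]; last exact: connect_adj_sub.
case/orP: (connected_minus_edge e v connT) => // c2v.
have c12 : connect (adj ends (~: C)) (ends e).1 (ends e).2.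
  by apply: connect_trans c1v _; rewrite adj_connect_sym (connect_adj_sub sT).
by move: (cut_separates_tree_edge cutC connT sT); rewrite c12.
Qed.

Lemma cut_meets_tree C T : is_edge_cut ends C -> is_spanning_tree ends T ->
  C :&: T != set0.
Proof.
move=> cutC /minsetp connT; apply: contra cutC; rewrite setI_eq0 => dCT.
apply/forallP => a; apply/forallP => b; apply: (connect_adj_sub (F := T)).
  by rewrite -disjoints_subset disjoint_sym.
by move/forallP: connT => /(_ a)/forallP.
Qed.

(* A minimal edge cut meeting a spanning tree T exactly in e is the boundary of
   the component of (ends e).1 in T - e, hence unique. *)
Lemma fundamental_cut_unique T C D e : is_spanning_tree ends T ->
  is_min_edge_cut ends C -> is_min_edge_cut ends D ->
  C :&: T = [set e] -> D :&: T = [set e] -> C = D.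
Proof.
move=> /minsetp connT mC mD CT DT.
have avoid X : X :&: T = [set e] -> T :\ e \subset ~: X.
  move=> XT; apply/subsetP => f; rewrite !inE => /andP[fe fT].
  by apply: contra fe => fX; rewrite (singleton_meetP XT fX fT).
rewrite (min_cut_boundary (ends e).1 mC) (min_cut_boundary (ends e).1 mD).
rewrite (reach_tree_minus_edge (minsetp mC) connT (avoid C CT)).
by rewrite (reach_tree_minus_edge (minsetp mD) connT (avoid D DT)).
Qed.
End GraphFacts.

Theorem mainTheorem2 :
  (forall (E : finType) (M : matroid E) (k : nat),
     sigma_eq M k -> lambda_eq M k ->
     forall C D : {set E},
       is_cocircuit M C -> is_cocircuit M D -> #|C| = k -> #|D| = k ->
       C != D -> [disjoint C & D])
  /\
  (forall (V E : finType) (ends : E -> V * V) (k : nat),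
     graph_connected ends -> graph_lambda_eq ends k -> graph_sigma_eq ends k ->
     forall C D : {set E},
       is_min_edge_cut ends C -> is_min_edge_cut ends D ->
       #|C| = k -> #|D| = k -> C != D -> [disjoint C & D]).
Proof.
split.
  move=> E M k [[F [baseF disjF]] _] _.
  apply: (small_blockers_disjoint disjF (P := is_cocircuit M)).
    by move=> C cC i; apply: cocircuit_meets_base cC (baseF i).
  by move=> i e C D; apply: fundamental_cocircuit_unique (baseF i).
move=> V E ends k _ _ [[F [treeF disjF]] _].
apply: (small_blockers_disjoint disjF (P := is_min_edge_cut ends)).
  by move=> C /minsetp cutC i; apply: cut_meets_tree cutC (treeF i).
by move=> i e C D; apply: fundamental_cut_unique (treeF i).
Qed.
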